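(* Let $p_{global}^{min}\in(0,1)$ satisfy $p_{global}^{min}\le\min_j p_j^{min}$, and suppose that for every node $\ell$, $$\frac{(N-1)(1-p_{global}^{min})^{N-2}}{e^{\rho_{\ell2}}(\alpha_\ell+1)}<1.$$ Then the game $\mathcal{G}$ has a unique Nash equilibrium $\mathbf{P}^{NE}$, and the best-response iteration $\mathbf{P}(t+1)=f^{br}(\mathbf{P}(t))$, started from any $\mathbf{P}(1)\in\prod_{\ell}[p_\ell^{min},1]$, converges to $\mathbf{P}^{NE}$.
   Context: Game $\mathcal{G}$: $N$ nodes (players); node $\ell$ has parameters $c_\ell>0$, $\rho_{\ell1}>0$, $\rho_{\ell2}>0$, $p_\ell^{min}\in(0,1)$, and $\alpha_\ell=c_\ell\rho_{\ell1}$. For $\mathbf{P}=(p_1,\dots,p_N)$, with $1/b_\ell:=e^{-\rho_{\ell2}}\prod_{k\neq\ell}(1-p_k)$, the virtual utility of node $\ell$ is $$U_\ell(p_\ell;\mathbf{P}_{-\ell})=-\frac{e^{-\alpha_\ell p_\ell}}{\alpha_\ell}-\frac{p_\ell^2}{2}\Big(1+\frac{1}{b_\ell}\Big)+\frac{1+\alpha_\ell}{\alpha_\ell}.$$ Node $\ell$'s action set is $[p_\ell^{min},1]$. The best-response map $f^{br}:\prod_\ell[p_\ell^{min},1]\to\prod_\ell[p_\ell^{min},1]$ has components $f^{br}(\mathbf{P})_\ell=\arg\max_{p\in[p_\ell^{min},1]}U_\ell(p;\mathbf{P}_{-\ell})$ (unique by strict concavity). A Nash equilibrium is a $\mathbf{P}^{NE}$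 with $f^{br}(\mathbf{P}^{NE})=\mathbf{P}^{NE}$. *)

From Stdlib Require Import Reals Lra Lia List Arith ClassicalEpsilon.
Import ListNotations.
Open Scope R_scope.

(* A strategy profile is a function nat -> R; node indices are 0..N-1. *)

Definition prod_others (N : nat) (P : nat -> R) (l : nat) : R :=
  fold_right Rmult 1
    (map (fun k => 1 - P k) (filter (fun k => negb (Nat.eqb k l)) (seq 0 N))).

Definition inv_b (N : nat) (rho2 : nat -> R) (P : nat -> R) (l : nat) : R :=
  exp (- rho2 l) * prod_others N P l.

Definition alpha (c rho1 : nat -> R) (l : nat) : R := c l * rho1 l.

Definition U (N : nat) (c rho1 rho2 : nat -> R) (l : nat) (p : R) (P : nat -> R) : R :=
  let a := alpha c rho1 l in
  - exp (- a * p) / a - p ^ 2 / 2 * (1 + inv_b N rho2 P l) + (1 + a) / a.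

Definition is_best_response (N : nat) (c rho1 rho2 pmin : nat -> R)
    (P : nat -> R) (l : nat) (p : R) : Prop :=
  pmin l <= p <= 1 /\
  forall q, pmin l <= q <= 1 -> U N c rho1 rho2 l q P <= U N c rho1 rho2 l p P.

Definition fbr (N : nat) (c rho1 rho2 pmin : nat -> R) (P : nat -> R) : nat -> R :=
  fun l => epsilon (inhabits 0) (is_best_response N c rho1 rho2 pmin P l).

Definition in_box (N : nat) (pmin : nat -> R) (P : nat -> R) : Prop :=
  forall l, (l < N)%nat -> pmin l <= P l <= 1.

Definition is_NE (N : nat) (c rho1 rho2 pmin : nat -> R) (P : nat -> R) : Prop :=
  in_box N pmin P /\
  forall l, (l < N)%nat -> fbr N c rho1 rho2 pmin P l = P l.

(* Each node's utility is strictly concave in its own action, so its best response is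
   the unique point satisfying the first-order conditions on [[p_min, 1]].  Comparing
   these conditions for two values [B], [C] of the coefficient [1/b] and using convexity
   of the exponential gives [|r - s| (1 + α) <= |B - C|].  In turn [1/b] is Lipschitz
   in the other actions for the sup norm, with constant
   [e^{-ρ₂} (N - 1) (1 - p_global^min)^{N-2}], since every factor [1 - p_k] lies in
   [[0, 1 - p_global^min]].  Under the hypothesis, [f^br] is therefore a contraction of
   the box of strategy profiles, and the Banach fixed-point argument yields a unique
   equilibrium attracting every best-response trajectory. *)

From Stdlib Require Import Reals Lra Lia List ClassicalEpsilon.
Open Scope R_scope.

Definition payoff (a B p : R) : R :=
  - exp (- a * p) / a - p ^ 2 / 2 * (1 + B) + (1 + a) / a.

Lemma U_payoff N c rho1 rho2 l p P :
  U N c rho1 rho2 l p P = payoff (alpha c rho1 l) (inv_b N rho2 P l) p.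
Proof. reflexivity. Qed.

(* First-order conditions for maximizing [payoff a B] on [[pm, 1]]; the derivative is
   [exp (- a * p) - p * (1 + B)], and the constraint [p <= 1] never binds because this
   derivative is negative at [p = 1]. *)
Definition kkt_point (pm a B r : R) : Prop :=
  pm <= r <= 1 /\ exp (- a * r) <= r * (1 + B) /\
  (r = pm \/ exp (- a * r) = r * (1 + B)).

Lemma exp_tangent_le a r q : exp (- a * r) * (1 - a * (q - r)) <= exp (- a * q).
Proof.
  replace (- a * q) with (- a * r + - a * (q - r)) by ring.
  rewrite exp_plus. apply Rmult_le_compat_l; [left; apply exp_pos|].
  pose proof (exp_ineq1_le (- a * (q - r))). lra.
Qed.

Lemma kkt_point_exists pm a B : 0 < a -> 0 <= B -> 0 < pm < 1 ->
  exists r, kkt_point pm a B r.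
Proof.
  intros Ha HB Hpm.
  set (g := fun p => p * (1 + B) - exp (- a * p)).
  destruct (Rle_dec 0 (g pm)) as [Hg | Hg].
  - exists pm. unfold g in Hg. repeat split; lra.
  - assert (Hg1 : 0 < g 1).
    { assert (exp (- a * 1) < exp 0) by (apply exp_increasing; lra).
      rewrite exp_0 in *. unfold g. lra. }
    assert (g_cont : continuity g) by (unfold g; reg).
    destruct (IVT g pm 1 g_cont ltac:(lra) ltac:(lra) Hg1) as [r [Hr Hgr]].
    exists r. unfold g in Hgr. repeat split; lra.
Qed.

Lemma payoff_quadratic_gap pm a B r q : 0 < a -> kkt_point pm a B r -> pm <= q ->
  payoff a B q <= payoff a B r - (1 + B) * (q - r) ^ 2 / 2.
Proof.
  intros Ha [_ [Hle Hcase]] Hq. unfold payoff.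
  assert (Hfoc : exp (- a * r) * (q - r) <= r * (1 + B) * (q - r)).
  { destruct Hcase as [-> | ->]; [apply Rmult_le_compat_r|]; lra. }
  assert (Hexp : exp (- a * r) / a - exp (- a * q) / a <= exp (- a * r) * (q - r)).
  { pose proof (exp_tangent_le a r q).
    apply (Rmult_le_reg_l a); [lra|]. field_simplify; [nra | lra]. }
  nra.
Qed.

Lemma kkt_point_lipschitz_lt pm a B C r s : 0 < a -> 0 <= B -> 0 <= C ->
  kkt_point pm a B r -> kkt_point pm a C s -> s < r -> (r - s) * (1 + a) <= C - B.
Proof.
  intros Ha HB HC [Hr [_ Hrcase]] [Hs [Hsle _]] Hsr.
  assert (Hrint : exp (- a * r) = r * (1 + B)) by (destruct Hrcase; lra).
  assert (Hconv : r * (1 + B) * (1 + a * (r - s)) <= s * (1 + C)).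
  { pose proof (exp_tangent_le a r s). rewrite Hrint in *. lra. }
  assert (Hrpos : 0 < r).
  { apply (Rmult_lt_reg_r (1 + B)); [lra|]. rewrite Rmult_0_l, <- Hrint. apply exp_pos. }
  assert (HrBa : 0 <= r * B * a * (r - s)) by (repeat apply Rmult_le_pos; lra).
  assert (HsC : s * C <= r * C) by nra.
  assert (Hr1 : r * (r - s) <= r - s) by nra.
  assert (Hkey : r * ((r - s) * (1 + a)) <= r * (C - B)) by nra.
  apply Rmult_le_reg_l in Hkey; lra.
Qed.

Lemma kkt_point_lipschitz pm a B C r s : 0 < a -> 0 <= B -> 0 <= C ->
  kkt_point pm a B r -> kkt_point pm a C s -> Rabs (r - s) * (1 + a) <= Rabs (B - C).
Proof.
  intros Ha HB HC Hr Hs.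
  destruct (Rtotal_order s r) as [Hsr | [-> | Hrs]].
  - pose proof (kkt_point_lipschitz_lt pm a B C r s Ha HB HC Hr Hs Hsr).
    rewrite Rabs_pos_eq by lra. rewrite Rabs_minus_sym.
    pose proof (Rle_abs (C - B)). lra.
  - rewrite Rminus_diag, Rabs_R0, Rmult_0_l. apply Rabs_pos.
  - pose proof (kkt_point_lipschitz_lt pm a C B s r Ha HC HB Hs Hr Hrs).
    rewrite Rabs_minus_sym, Rabs_pos_eq by lra.
    pose proof (Rle_abs (B - C)). lra.
Qed.

Section BestResponse.
Variables (N : nat) (c rho1 rho2 pmin : nat -> R) (P : nat -> R) (l : nat).
Hypotheses (alpha_pos : 0 < alpha c rho1 l) (inv_b_nonneg : 0 <= inv_b N rho2 P l).

Lemma kkt_point_best_response r :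
  kkt_point (pmin l) (alpha c rho1 l) (inv_b N rho2 P l) r ->
  is_best_response N c rho1 rho2 pmin P l r.
Proof.
  intros Hr. split; [apply Hr|]. intros q Hq. rewrite !U_payoff.
  pose proof (payoff_quadratic_gap _ _ _ r q alpha_pos Hr (proj1 Hq)).
  pose proof (pow2_ge_0 (q - r)). nra.
Qed.

Lemma best_response_eq_kkt_point r s :
  kkt_point (pmin l) (alpha c rho1 l) (inv_b N rho2 P l) r ->
  is_best_response N c rho1 rho2 pmin P l s -> s = r.
Proof.
  intros Hr [Hs Hsmax]. specialize (Hsmax r (proj1 Hr)). rewrite !U_payoff in Hsmax.
  pose proof (payoff_quadratic_gap _ _ _ r s alpha_pos Hr (proj1 Hs)).
  assert (Hsq : (s - r) * (s - r) <= 0) by nra.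
  nra.
Qed.

Lemma fbr_kkt_point : 0 < pmin l < 1 ->
  kkt_point (pmin l) (alpha c rho1 l) (inv_b N rho2 P l) (fbr N c rho1 rho2 pmin P l).
Proof.
  intros Hpmin.
  destruct (kkt_point_exists _ _ _ alpha_pos inv_b_nonneg Hpmin) as [r Hr].
  assert (Hfbr : is_best_response N c rho1 rho2 pmin P l (fbr N c rho1 rho2 pmin P l)).
  { unfold fbr. apply epsilon_spec. exists r. now apply kkt_point_best_response. }
  now rewrite (best_response_eq_kkt_point r _ Hr Hfbr).
Qed.

End BestResponse.

Lemma prod_map_bounds {A : Type} (x : A -> R) m L : 0 <= m ->
  (forall k, In k L -> 0 <= x k <= m) ->
  0 <= fold_right Rmult 1 (map x L) <= m ^ length L.
Proof.
  intros Hm. induction L as [|k L IH]; intros HL; simpl; [lra|].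
  destruct (HL k (or_introl eq_refl)).
  destruct IH as [IH0 IHm]; [intros j Hj; apply HL; now right|].
  split; [nra | apply Rmult_le_compat; lra].
Qed.

Lemma prod_map_lipschitz {A : Type} (x y : A -> R) m D L : 0 <= m ->
  (forall k, In k L -> 0 <= x k <= m /\ 0 <= y k <= m /\ Rabs (x k - y k) <= D) ->
  Rabs (fold_right Rmult 1 (map x L) - fold_right Rmult 1 (map y L))
    <= INR (length L) * m ^ (length L - 1) * D.
Proof.
  intros Hm. induction L as [|k L IH]; intros HL.
  - simpl. rewrite Rminus_diag, Rabs_R0. lra.
  - destruct (HL k (or_introl eq_refl)) as [Hx [Hy Hxy]].
    assert (HL' : forall j, In j L -> 0 <= x j <= m /\ 0 <= y j <= m /\ Rabs (x j - y j) <= D)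
      by (intros j Hj; apply HL; now right).
    specialize (IH HL').
    destruct (prod_map_bounds x m L Hm) as [X0 Xm]; [intros j Hj; apply HL'; auto|].
    destruct (prod_map_bounds y m L Hm) as [Y0 Ym]; [intros j Hj; apply HL'; auto|].
    simpl map; simpl fold_right; simpl length.
    set (X := fold_right Rmult 1 (map x L)) in *.
    set (Y := fold_right Rmult 1 (map y L)) in *.
    assert (HD : 0 <= D) by (pose proof (Rabs_pos (x k - y k)); lra).
    replace (x k * X - y k * Y) with ((x k - y k) * X + y k * (X - Y)) by ring.
    eapply Rle_trans; [apply Rabs_triang|]. rewrite !Rabs_mult, (Rabs_pos_eq X), (Rabs_pos_eq (y k)) by lra.
    assert (Hhead : Rabs (x k - y k) * X <= D * m ^ length L)
      by (apply Rmult_le_compat; auto using Rabs_pos).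
    assert (Htail : y k * Rabs (X - Y) <= m * (INR (length L) * m ^ (length L - 1) * D))
      by (apply Rmult_le_compat; auto using Rabs_pos; lra).
    replace (S (length L) - 1)%nat with (length L) by lia. rewrite S_INR.
    destruct (length L) as [|n]; simpl in *; [lra|].
    rewrite Nat.sub_0_r in Htail. lra.
Qed.

Definition others (N l : nat) : list nat := filter (fun k => negb (Nat.eqb k l)) (seq 0 N).

Lemma in_others N l k : In k (others N l) -> (k < N)%nat.
Proof. unfold others. rewrite filter_In, in_seq. lia. Qed.

Lemma length_others N l : (l < N)%nat -> length (others N l) = (N - 1)%nat.
Proof.
  intros Hl. unfold others.
  assert (Hkeep : forall s n, (l < s \/ s + n <= l)%nat ->
            filter (fun k => negb (Nat.eqb k l)) (seq s n) = seq s n).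
  { intros s n Hsn. rewrite <- (filter_true (seq s n)) at 2. apply filter_ext_in.
    intros k Hk. apply in_seq in Hk. destruct (Nat.eqb_spec k l); [lia | reflexivity]. }
  replace N with (l + S (N - S l))%nat at 1 by lia.
  rewrite seq_app, filter_app. simpl. rewrite Nat.eqb_refl. simpl.
  rewrite !Hkeep by lia. rewrite length_app, !length_seq. lia.
Qed.

Definition close (N : nat) (D : R) (P Q : nat -> R) : Prop :=
  forall k, (k < N)%nat -> Rabs (P k - Q k) <= D.

Lemma inv_b_nonneg N rho2 lo P l : (forall k, (k < N)%nat -> 0 <= lo k) ->
  in_box N lo P -> 0 <= inv_b N rho2 P l.
Proof.
  intros Hlo HP. unfold inv_b, prod_others. fold (others N l).
  apply Rmult_le_pos; [left; apply exp_pos|].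
  apply (prod_map_bounds (fun k => 1 - P k) 1 (others N l)); [lra|].
  intros k Hk. apply in_others in Hk. specialize (HP k Hk). specialize (Hlo k Hk). lra.
Qed.

Lemma inv_b_lipschitz N rho2 pg P Q D l : (l < N)%nat -> pg <= 1 ->
  in_box N (fun _ => pg) P -> in_box N (fun _ => pg) Q -> close N D P Q ->
  Rabs (inv_b N rho2 P l - inv_b N rho2 Q l)
    <= INR (N - 1) * (1 - pg) ^ (N - 2) / exp (rho2 l) * D.
Proof.
  intros Hl Hpg HP HQ HPQ. unfold inv_b, prod_others. fold (others N l).
  rewrite <- Rmult_minus_distr_l, Rabs_mult, Rabs_pos_eq, exp_Ropp by (left; apply exp_pos).
  replace (INR (N - 1) * (1 - pg) ^ (N - 2) / exp (rho2 l) * D)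
    with (/ exp (rho2 l) * (INR (N - 1) * (1 - pg) ^ (N - 1 - 1) * D))
    by (replace (N - 1 - 1)%nat with (N - 2)%nat by lia; field; apply Rgt_not_eq, exp_pos).
  apply Rmult_le_compat_l; [left; apply Rinv_0_lt_compat, exp_pos|].
  rewrite <- (length_others N l Hl).
  apply prod_map_lipschitz; [lra|].
  intros k Hk. apply in_others in Hk.
  specialize (HP k Hk). specialize (HQ k Hk). specialize (HPQ k Hk). simpl in *.
  replace (1 - P k - (1 - Q k)) with (- (P k - Q k)) by ring. rewrite Rabs_Ropp. lra.
Qed.

Lemma pow_eventually_lt K eps : 0 <= K < 1 -> 0 < eps ->
  exists T, forall t, (t >= T)%nat -> K ^ t < eps.
Proof.
  intros HK Heps.
  destruct (pow_lt_1_zero K ltac:(rewrite Rabs_pos_eq; lra) eps Heps) as [T HT].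
  exists T. intros t Ht. specialize (HT t Ht).
  rewrite Rabs_pos_eq in HT by (apply pow_le; lra). exact HT.
Qed.

Lemma Un_cv_geom_bound (u : nat -> R) x K : 0 <= K < 1 ->
  (forall t, Rabs (u t - x) <= K ^ t) -> Un_cv u x.
Proof.
  intros HK Hu eps Heps. destruct (pow_eventually_lt K eps HK Heps) as [T HT].
  exists T. intros t Ht. unfold R_dist. eapply Rle_lt_trans; [apply Hu | now apply HT].
Qed.

Lemma Cauchy_crit_geom_bound (u : nat -> R) K : 0 <= K < 1 ->
  (forall m n, (m <= n)%nat -> Rabs (u n - u m) <= K ^ m) -> Cauchy_crit u.
Proof.
  intros HK Hu eps Heps. destruct (pow_eventually_lt K eps HK Heps) as [T HT].
  exists T. intros n m Hn Hm. unfold R_dist.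
  destruct (Nat.le_gt_cases m n) as [Hmn | Hnm].
  - eapply Rle_lt_trans; [apply Hu, Hmn | now apply HT].
  - rewrite Rabs_minus_sym. eapply Rle_lt_trans; [apply Hu; lia | now apply HT].
Qed.

Lemma eq_geom_bound x y C K : 0 <= K < 1 ->
  (forall t, Rabs (x - y) <= C * K ^ t) -> x = y.
Proof.
  intros HK Hxy. destruct (Req_dec x y) as [E | E]; [exact E | exfalso].
  assert (Hd : 0 < Rabs (x - y)) by (apply Rabs_pos_lt; lra).
  assert (HC : 0 < C).
  { specialize (Hxy O). simpl in Hxy. lra. }
  destruct (pow_eventually_lt K (Rabs (x - y) / C) HK) as [T HT];
    [apply Rdiv_lt_0_compat; lra|].
  specialize (HT T (le_n T)). specialize (Hxy T).
  apply (Rmult_lt_compat_l C) in HT; [|lra].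
  replace (C * (Rabs (x - y) / C)) with (Rabs (x - y)) in HT by (field; lra). lra.
Qed.

Lemma Un_cv_interval (u : nat -> R) x a b T : Un_cv u x ->
  (forall t, (t >= T)%nat -> a <= u t <= b) -> a <= x <= b.
Proof.
  intros Hu Hab.
  split; apply Rnot_lt_le; intro Hx;
    [destruct (Hu (a - x)) as [M HM] | destruct (Hu (x - b)) as [M HM]]; try lra;
    specialize (HM (Nat.max M T) ltac:(lia)); specialize (Hab (Nat.max M T) ltac:(lia));
    unfold R_dist in HM; apply Rabs_def2 in HM; lra.
Qed.

Lemma ex_Un_cv_family N (u : nat -> nat -> R) :
  (forall l, (l < N)%nat -> Cauchy_crit (u l)) ->
  exists x : nat -> R, forall l, (l < N)%nat -> Un_cv (u l) (x l).
Proof.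
  intros Hu.
  exists (fun l => epsilon (inhabits 0) (fun x => (l < N)%nat -> Un_cv (u l) x)).
  intros l Hl. apply (epsilon_spec (inhabits 0) (fun x => (l < N)%nat -> Un_cv (u l) x)); [|exact Hl].
  destruct (R_complete _ (Hu l Hl)) as [x Hx]. now exists x.
Qed.

Definition fixed_on (N : nat) (F : (nat -> R) -> nat -> R) (P : nat -> R) : Prop :=
  forall l, (l < N)%nat -> F P l = P l.

Section BoxContraction.
Variables (N : nat) (lo : nat -> R) (F : (nat -> R) -> nat -> R) (K : R).
Hypotheses (lo_range : forall l, (l < N)%nat -> 0 <= lo l <= 1)
  (K_range : 0 <= K < 1)
  (F_in_box : forall P, in_box N lo P -> in_box N lo (F P))
  (F_contraction : forall P Q D, in_box N lo P -> in_box N lo Q ->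
     close N D P Q -> close N (K * D) (F P) (F Q)).

Lemma in_box_close P Q : in_box N lo P -> in_box N lo Q -> close N 1 P Q.
Proof.
  intros HP HQ k Hk. specialize (HP k Hk). specialize (HQ k Hk). specialize (lo_range k Hk).
  apply Rabs_le. lra.
Qed.

Lemma iter_in_box t P : in_box N lo P -> in_box N lo (Nat.iter t F P).
Proof. intros HP. induction t; simpl; auto. Qed.

Lemma iter_close t P Q : in_box N lo P -> in_box N lo Q ->
  close N (K ^ t) (Nat.iter t F P) (Nat.iter t F Q).
Proof.
  intros HP HQ. induction t; simpl.
  - now apply in_box_close.
  - apply F_contraction; auto using iter_in_box.
Qed.

Lemma iter_close_fixed t P Pf : in_box N lo P -> in_box N lo Pf -> fixed_on N F Pf ->
  close N (K ^ t) (Nat.iter t F P) Pf.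
Proof.
  intros HP HPf Hfix. induction t; simpl.
  - now apply in_box_close.
  - intros k Hk. rewrite <- (Hfix k Hk). apply F_contraction; auto using iter_in_box.
Qed.

Lemma fixed_points_close t Pf Qf : in_box N lo Pf -> in_box N lo Qf ->
  fixed_on N F Pf -> fixed_on N F Qf -> close N (K ^ t) Pf Qf.
Proof.
  intros HP HQ HPf HQf. induction t; simpl.
  - now apply in_box_close.
  - intros k Hk. rewrite <- (HPf k Hk), <- (HQf k Hk). now apply F_contraction.
Qed.

Lemma box_contraction_fixed_point : exists Pf,
  in_box N lo Pf /\ fixed_on N F Pf /\
  (forall Qf, in_box N lo Qf -> fixed_on N F Qf -> forall l, (l < N)%nat -> Qf l = Pf l) /\
  (forall P, in_box N lo P -> forall l, (l < N)%nat -> Un_cv (fun t => Nat.iter t F P l) (Pf l)).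
Proof.
  assert (Hlo : in_box N lo lo) by (intros l Hl; specialize (lo_range l Hl); lra).
  destruct (ex_Un_cv_family N (fun l t => Nat.iter t F lo l)) as [Pf HPf].
  { intros l Hl. apply (Cauchy_crit_geom_bound _ K K_range). intros m n Hmn.
    replace n with (m + (n - m))%nat by lia. rewrite Nat.iter_add.
    apply iter_close; auto using iter_in_box. }
  assert (Hbox : in_box N lo Pf).
  { intros l Hl. apply (Un_cv_interval _ _ _ _ O (HPf l Hl)). intros t _.
    now apply iter_in_box. }
  assert (Hnear : forall t, close N (K ^ t) Pf (Nat.iter t F lo)).
  { intros t l Hl. apply Rabs_le.
    enough (Nat.iter t F lo l - K ^ t <= Pf l <= Nat.iter t F lo l + K ^ t) by lra.
    apply (Un_cv_interval _ _ _ _ t (HPf l Hl)). intros n Hn.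
    replace n with (t + (n - t))%nat by lia. rewrite Nat.iter_add.
    pose proof (iter_close t (Nat.iter (n - t) F lo) lo
      (iter_in_box _ _ Hlo) Hlo l Hl) as Hl'.
    revert Hl'; unfold Rabs; destruct Rcase_abs; lra. }
  assert (Hfix : fixed_on N F Pf).
  { intros l Hl. apply (eq_geom_bound _ _ 2 K K_range). intros t.
    pose proof (F_contraction _ _ _ Hbox (iter_in_box t _ Hlo) (Hnear t) l Hl) as HF.
    pose proof (Hnear (S t) l Hl) as HS. simpl in HS.
    replace (F Pf l - Pf l)
      with ((F Pf l - F (Nat.iter t F lo) l) - (Pf l - F (Nat.iter t F lo) l)) by ring.
    eapply Rle_trans; [apply Rabs_triang|]. rewrite Rabs_Ropp.
    assert (K * K ^ t <= K ^ t) by (pose proof (pow_le K t ltac:(lra)); nra).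
    lra. }
  exists Pf. split; [exact Hbox|]. split; [exact Hfix|]. split.
  - intros Qf HQ HQf l Hl. apply (eq_geom_bound _ _ 1 K K_range). intros t.
    rewrite Rmult_1_l. now apply fixed_points_close.
  - intros P HP l Hl. apply (Un_cv_geom_bound _ _ K K_range). intros t.
    now apply iter_close_fixed.
Qed.

End BoxContraction.

Section Game.
Variables (N : nat) (c rho1 rho2 pmin : nat -> R) (pg : R).
Hypotheses (Hc : forall l, (l < N)%nat -> 0 < c l)
  (Hrho1 : forall l, (l < N)%nat -> 0 < rho1 l)
  (Hpmin : forall l, (l < N)%nat -> 0 < pmin l < 1)
  (Hpg : 0 < pg < 1)
  (Hpg_le : forall j, (j < N)%nat -> pg <= pmin j).

Let alpha_pos l : (l < N)%nat -> 0 < alpha c rho1 l.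
Proof. intros Hl. specialize (Hc l Hl). specialize (Hrho1 l Hl). unfold alpha. nra. Qed.

Let in_box_pg P : in_box N pmin P -> in_box N (fun _ => pg) P.
Proof. intros HP k Hk. specialize (HP k Hk). specialize (Hpg_le k Hk). lra. Qed.

Let inv_b_nonneg_box P l : in_box N pmin P -> 0 <= inv_b N rho2 P l.
Proof. intros HP. apply (inv_b_nonneg N rho2 pmin); auto. intros k Hk. apply Rlt_le, Hpmin, Hk. Qed.

Let fbr_kkt P l : (l < N)%nat -> in_box N pmin P ->
  kkt_point (pmin l) (alpha c rho1 l) (inv_b N rho2 P l) (fbr N c rho1 rho2 pmin P l).
Proof. intros Hl HP. apply fbr_kkt_point; auto. Qed.

Lemma fbr_in_box P : in_box N pmin P -> in_box N pmin (fbr N c rho1 rho2 pmin P).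
Proof. intros HP l Hl. apply (fbr_kkt P l Hl HP). Qed.

Lemma fbr_lipschitz P Q D l : (l < N)%nat -> in_box N pmin P -> in_box N pmin Q ->
  close N D P Q ->
  Rabs (fbr N c rho1 rho2 pmin P l - fbr N c rho1 rho2 pmin Q l)
    <= INR (N - 1) * (1 - pg) ^ (N - 2) / (exp (rho2 l) * (alpha c rho1 l + 1)) * D.
Proof.
  intros Hl HP HQ HPQ.
  pose proof (alpha_pos l Hl) as Ha.
  pose proof (kkt_point_lipschitz _ _ _ _ _ _ Ha (inv_b_nonneg_box P l HP)
    (inv_b_nonneg_box Q l HQ) (fbr_kkt P l Hl HP) (fbr_kkt Q l Hl HQ)) as Hfbr.
  pose proof (inv_b_lipschitz N rho2 pg P Q D l Hl ltac:(lra) (in_box_pg P HP)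
    (in_box_pg Q HQ) HPQ) as Hinv.
  apply (Rmult_le_reg_r (1 + alpha c rho1 l)); [lra|].
  replace (INR (N - 1) * (1 - pg) ^ (N - 2) / (exp (rho2 l) * (alpha c rho1 l + 1)) * D
             * (1 + alpha c rho1 l))
    with (INR (N - 1) * (1 - pg) ^ (N - 2) / exp (rho2 l) * D)
    by (field; split; [lra | apply Rgt_not_eq, exp_pos]).
  lra.
Qed.

Lemma fbr_contraction K :
  (forall l, (l < N)%nat ->
     INR (N - 1) * (1 - pg) ^ (N - 2) / (exp (rho2 l) * (alpha c rho1 l + 1)) <= K) ->
  forall P Q D, in_box N pmin P -> in_box N pmin Q -> close N D P Q ->
  close N (K * D) (fbr N c rho1 rho2 pmin P) (fbr N c rho1 rho2 pmin Q).
Proof.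
  intros HK P Q D HP HQ HPQ l Hl.
  assert (HD : 0 <= D) by (eapply Rle_trans; [apply Rabs_pos | apply (HPQ l Hl)]).
  eapply Rle_trans; [apply (fbr_lipschitz P Q D l); assumption|].
  apply Rmult_le_compat_r; auto.
Qed.

End Game.

Lemma ex_uniform_lt_1 (f : nat -> R) N : (forall l, (l < N)%nat -> f l < 1) ->
  exists K, 0 <= K < 1 /\ forall l, (l < N)%nat -> f l <= K.
Proof.
  induction N as [|N IH]; intros Hf.
  - exists 0. split; [lra | intros; lia].
  - destruct IH as [K [HK HKf]]; [intros l Hl; apply Hf; lia|].
    exists (Rmax K (f N)). split.
    + split; [apply (Rle_trans _ K); [lra | apply Rmax_l]|].
      apply Rmax_lub_lt; [lra | apply Hf; lia].
    + intros l Hl. destruct (Nat.eq_dec l N) as [-> | Hne]; [apply Rmax_r|].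
      apply (Rle_trans _ K); [apply HKf; lia | apply Rmax_l].
Qed.

Theorem theorem5 (N : nat) (c rho1 rho2 pmin : nat -> R) (pg : R)
  (Hc : forall l, (l < N)%nat -> 0 < c l)
  (Hrho1 : forall l, (l < N)%nat -> 0 < rho1 l)
  (Hrho2 : forall l, (l < N)%nat -> 0 < rho2 l)
  (Hpmin : forall l, (l < N)%nat -> 0 < pmin l < 1)
  (Hpg : 0 < pg < 1)
  (Hpg_le : forall j, (j < N)%nat -> pg <= pmin j)
  (Hcond : forall l, (l < N)%nat ->
     INR (N - 1) * (1 - pg) ^ (N - 2) / (exp (rho2 l) * (alpha c rho1 l + 1)) < 1) :
  exists PNE : nat -> R,
    is_NE N c rho1 rho2 pmin PNE /\
    (forall Q : nat -> R, is_NE N c rho1 rho2 pmin Q ->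
       forall l, (l < N)%nat -> Q l = PNE l) /\
    (forall P1 : nat -> R, in_box N pmin P1 ->
       forall l, (l < N)%nat ->
         Un_cv (fun t => Nat.iter t (fbr N c rho1 rho2 pmin) P1 l) (PNE l)).
Proof.
  destruct (ex_uniform_lt_1 _ N Hcond) as [K [HK HKl]].
  assert (Hlo : forall l, (l < N)%nat -> 0 <= pmin l <= 1)
    by (intros l Hl; specialize (Hpmin l Hl); lra).
  destruct (box_contraction_fixed_point N pmin (fbr N c rho1 rho2 pmin) K Hlo HK
    (fbr_in_box N c rho1 rho2 pmin Hc Hrho1 Hpmin)
    (fbr_contraction N c rho1 rho2 pmin pg Hc Hrho1 Hpmin Hpg Hpg_le K HKl))
    as [PNE [Hbox [Hfix [Huniq Hconv]]]].
  exists PNE. split; [split; assumption|]. split; [|exact Hconv].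
  intros Q [HQ HQf]. now apply Huniq.
Qed.
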